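(* Let $k$ be a positive integer, $a_1>a_2>\cdots>a_n$ real numbers in $[a,b]$, and $w_1,\dots,w_n$ real weights such that $\sum_{i=1}^n w_ia_i^j=0$ for all integers $0\le j<k$ and \[ \sum_{i=1}^j w_i(a_i-a_{j+1})(a_i-a_{j+2})\cdots(a_i-a_{j+k-1})\ge 0\quad\text{for all }1\le j\le n-k \] (the product has $k-1$ factors; it is empty, i.e. equal to $1$, when $k=1$). Then $\sum_{i=1}^n w_if(a_i)\ge 0$ for every $k$ times differentiable $f:[a,b]\to\mathbb{R}$ with $f^{(k)}\ge 0$. *)

From Stdlib Require Import Reals Lra Lia.
Open Scope R_scope.

(* sumR f n = f 1 + f 2 + ... + f n  (1-based, empty sum = 0) *)
Fixpoint sumR (f : nat -> R) (n : nat) : R :=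
  match n with
  | O => 0
  | S m => sumR f m + f (S m)
  end.

Fixpoint prodR (f : nat -> R) (n : nat) : R :=
  match n with
  | O => 1
  | S m => prodR f m * f (S m)
  end.

(* g has derivative l at x relative to the interval [a,b]
   (one-sided at the endpoints). *)
Definition deriv_within (a b : R) (g : R -> R) (x l : R) : Prop :=
  forall eps : R, 0 < eps ->
    exists delta : R, 0 < delta /\
      forall y : R, a <= y <= b -> y <> x -> Rabs (y - x) < delta ->
        Rabs ((g y - g x) / (y - x) - l) < eps.

(* D 0, D 1, ..., D k are the successive derivatives of D 0 on [a,b]:
   D 0 is k times differentiable on [a,b] with j-th derivative D j. *)
Definition kth_derivs_on (a b : R) (k : nat) (D : nat -> R -> R) : Prop :=
  forall j : nat, (j < k)%nat ->
    forall x : R, a <= x <= b -> deriv_within a b (D j) x (D (S j) x).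

(* Call weights e on k+1 decreasing nodes x_1 > ... > x_{k+1} "divided-difference
   weights" if they annihilate all polynomials of degree < k (vanishing moments).  Such
   weights exist with e_1 = 1, and then  sum_i e_i f(x_i) >= 0  whenever f^(k) >= 0
   (the divided difference of f has the sign of f^(k)).  Given admissible weights w on n
   nodes, subtract w_1 times the divided-difference weights of the first k+1 nodes: the
   first weight cancels, w_1 >= 0 is the case j = 1 of the positivity hypothesis, and the
   remaining weights on the last n-1 nodes are admissible again, so induction on n
   concludes.  When n <= k, vanishing moments force w = 0 (Vandermonde). *)

From Stdlib Require Import Reals Lra Lia.
From Coquelicot Require Import Coquelicot.
Open Scope R_scope.

(** * Finite sums and products *)

Lemma sumR_ext (f g : nat -> R) (n : nat) :
  (forall i, (1 <= i <= n)%nat -> f i = g i) -> sumR f n = sumR g n.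
Proof.
  induction n as [|n IH]; intros H; simpl; [reflexivity|].
  rewrite IH by (intros; apply H; lia). rewrite H by lia. reflexivity.
Qed.

Lemma sumR_add (f g : nat -> R) (n : nat) :
  sumR (fun i => f i + g i) n = sumR f n + sumR g n.
Proof. induction n as [|n IH]; simpl; [|rewrite IH]; lra. Qed.

Lemma sumR_sub (f g : nat -> R) (n : nat) :
  sumR (fun i => f i - g i) n = sumR f n - sumR g n.
Proof. induction n as [|n IH]; simpl; [|rewrite IH]; lra. Qed.

Lemma sumR_scal (c : R) (f : nat -> R) (n : nat) :
  sumR (fun i => c * f i) n = c * sumR f n.
Proof. induction n as [|n IH]; simpl; [|rewrite IH]; lra. Qed.

Lemma sumR_shift (f : nat -> R) (n : nat) :
  sumR f (S n) = f 1%nat + sumR (fun i => f (S i)) n.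
Proof.
  induction n as [|n IH]; [simpl; lra|].
  change (sumR f (S (S n))) with (sumR f (S n) + f (S (S n))).
  rewrite IH. simpl. lra.
Qed.

Lemma sumR_extend (f : nat -> R) (m n : nat) :
  (m <= n)%nat -> (forall i, (m < i <= n)%nat -> f i = 0) -> sumR f n = sumR f m.
Proof.
  induction n as [|n IH]; intros Hmn H; [replace m with 0%nat by lia; reflexivity|].
  destruct (Nat.eq_dec m (S n)) as [->|Hne]; [reflexivity|].
  simpl. rewrite IH, (H (S n)) by (try intros; try apply H; lia). lra.
Qed.

Lemma sumR_zero (f : nat -> R) (n : nat) :
  (forall i, (1 <= i <= n)%nat -> f i = 0) -> sumR f n = 0.
Proof. intros H. rewrite (sumR_extend f 0 n) by (intros; try apply H; lia). reflexivity. Qed.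

Lemma prodR_eq0 (f : nat -> R) (K m : nat) :
  (1 <= m <= K)%nat -> f m = 0 -> prodR f K = 0.
Proof.
  induction K as [|K IH]; intros Hm H; [lia|]. simpl.
  destruct (Nat.eq_dec m (S K)) as [->|Hne]; [rewrite H | rewrite IH by (auto; lia)]; ring.
Qed.

Lemma prodR_pos (f : nat -> R) (K : nat) :
  (forall m, (1 <= m <= K)%nat -> 0 < f m) -> 0 < prodR f K.
Proof.
  induction K as [|K IH]; intros H; simpl; [lra|].
  apply Rmult_lt_0_compat; [apply IH; intros|]; apply H; lia.
Qed.

(** * Nodes and weights *)

Definition descending (x : nat -> R) (n : nat) : Prop :=
  forall i j : nat, (1 <= i)%nat -> (i < j)%nat -> (j <= n)%nat -> x j < x i.

Definition nodes_in (a b : R) (x : nat -> R) (n : nat) : Prop :=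
  forall i : nat, (1 <= i <= n)%nat -> a <= x i <= b.

Lemma descending_of_succ (x : nat -> R) (n : nat) :
  (forall i, (1 <= i < n)%nat -> x (S i) < x i) -> descending x n.
Proof.
  intros H i j Hi. induction j as [|j IH]; intros Hij Hj; [lia|].
  destruct (Nat.eq_dec i j) as [->|Hne]; [apply H; lia|].
  apply Rlt_trans with (x j); [apply H | apply IH]; lia.
Qed.

Definition moments_vanish (w x : nat -> R) (n K : nat) : Prop :=
  forall j : nat, (j < K)%nat -> sumR (fun i => w i * x i ^ j) n = 0.

Definition supported (e : nat -> R) (N : nat) : Prop :=
  forall i : nat, (i = 0 \/ N < i)%nat -> e i = 0.

Lemma sumR_supported (e F : nat -> R) (N M : nat) :
  supported e N -> (N <= M)%nat ->
  sumR (fun i => e i * F i) M = sumR (fun i => e i * F i) N.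
Proof. intros He HNM. apply sumR_extend; [lia|]. intros i Hi. rewrite He by lia. ring. Qed.

Lemma moments_mul_linear (w x : nat -> R) (n K : nat) (c : R) :
  moments_vanish w x n (S K) -> moments_vanish (fun i => w i * (x i - c)) x n K.
Proof.
  intros H j Hj.
  rewrite (sumR_ext _ (fun i => w i * x i ^ S j - c * (w i * x i ^ j))) by (intros; simpl; ring).
  rewrite sumR_sub, sumR_scal, !H by lia. ring.
Qed.

Lemma moments_prod (x : nat -> R) (n K : nat) : forall w c : nat -> R,
  moments_vanish w x n (S K) -> sumR (fun i => w i * prodR (fun m => x i - c m) K) n = 0.
Proof.
  induction K as [|K IH]; intros w c H.
  - rewrite <- (H 0%nat) by lia. apply sumR_ext; intros; simpl; ring.
  - rewrite (sumR_ext _ (fun i => (w i * (x i - c (S K))) * prodR (fun m => x i - c m) K))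
      by (intros; simpl; ring).
    apply IH, moments_mul_linear, H.
Qed.

Lemma moments_affine (w x : nat -> R) (n K : nat) (alpha beta : R) :
  moments_vanish w x n K -> moments_vanish w (fun i => alpha + beta * x i) n K.
Proof.
  intros H.
  assert (Hmixed : forall j m, (m + j < K)%nat ->
    sumR (fun i => w i * x i ^ m * (alpha + beta * x i) ^ j) n = 0).
  { induction j as [|j IH]; intros m Hmj.
    - rewrite <- (H m) by lia. apply sumR_ext; intros; simpl; ring.
    - rewrite (sumR_ext _ (fun i => alpha * (w i * x i ^ m * (alpha + beta * x i) ^ j)
                                  + beta * (w i * x i ^ S m * (alpha + beta * x i) ^ j)))
        by (intros; simpl; ring).
      rewrite sumR_add, !sumR_scal, !IH by lia. ring. }
  intros j Hj. rewrite <- (Hmixed j 0%nat) by lia. apply sumR_ext; intros; simpl; ring.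
Qed.

Lemma moments_full_zero (x : nat -> R) (n : nat) : forall w : nat -> R,
  descending x n -> moments_vanish w x n n -> forall i, (1 <= i <= n)%nat -> w i = 0.
Proof.
  induction n as [|n IH]; intros w Hd Hm; [lia|].
  assert (Hinit : forall i, (1 <= i <= n)%nat -> w i = 0).
  { intros i Hi.
    assert (Hprod : w i * (x i - x (S n)) = 0).
    { apply (IH (fun i => w i * (x i - x (S n)))); [intros ? ? ? ? ?; apply Hd; lia| |lia].
      intros j Hj. pose proof (moments_mul_linear w x (S n) n (x (S n)) Hm j Hj) as E.
      simpl in E. rewrite <- E. ring. }
    assert (x (S n) < x i) by (apply Hd; lia).
    destruct (Rmult_integral _ _ Hprod); [assumption | lra]. }
  intros i Hi. destruct (Nat.eq_dec i (S n)) as [->|]; [|apply Hinit; lia].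
  specialize (Hm 0%nat ltac:(lia)). simpl in Hm.
  rewrite sumR_zero in Hm by (intros; rewrite Hinit by lia; ring). lra.
Qed.

(* They are combined from the weights
   of the first k and of the last k nodes, cancelling the k-th moment. *)
Lemma dd_weights_exist (k : nat) : forall x : nat -> R,
  descending x (S k) ->
  exists e : nat -> R, e 1%nat = 1 /\ supported e (S k) /\ moments_vanish e x (S k) k.
Proof.
  induction k as [|k IH]; intros x Hd.
  - exists (fun i => if (i =? 1)%nat then 1 else 0). split; [reflexivity|split].
    + intros i Hi. destruct (Nat.eqb_spec i 1); [lia|reflexivity].
    + intros j Hj; lia.
  - destruct (IH x) as (eA & HA1 & HAsupp & HA); [intros ? ? ? ? ?; apply Hd; lia|].
    destruct (IH (fun i => x (S i))) as (eB & HB1 & HBsupp & HB);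
      [intros ? ? ? ? ?; apply Hd; lia|].
    set (MA := sumR (fun i => eA i * x i ^ k) (S k)).
    set (MB := sumR (fun i => eB i * x (S i) ^ k) (S k)).
    assert (HMB : MB <> 0).
    { intros HM. assert (HB0 : eB 1%nat = 0); [|lra].
      apply (moments_full_zero (fun i => x (S i)) (S k)); [intros ? ? ? ? ?; apply Hd; lia| |lia].
      intros j Hj. destruct (Nat.eq_dec j k) as [->|]; [exact HM | apply HB; lia]. }
    exists (fun i => eA i - MA / MB * eB (Nat.pred i)). split; [|split].
    + simpl. rewrite HA1, (HBsupp 0%nat) by lia. ring.
    + intros i Hi. rewrite HAsupp, HBsupp by lia. ring.
    + intros j Hj.
      rewrite (sumR_ext _ (fun i => eA i * x i ^ j - MA / MB * (eB (Nat.pred i) * x i ^ j)))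
        by (intros; ring).
      rewrite sumR_sub, sumR_scal, (sumR_supported eA _ (S k)) by (auto; lia).
      rewrite (sumR_shift (fun i => eB (Nat.pred i) * x i ^ j)). simpl Nat.pred. rewrite (HBsupp 0%nat), Rmult_0_l, Rplus_0_l by lia.
      destruct (Nat.eq_dec j k) as [->|].
      * fold MA MB. field. exact HMB.
      * rewrite HA, HB by lia. ring.
Qed.

(* Divided-difference weights annihilate the products appearing in the positivity
   hypothesis: with j >= 1, the extra terms up to index j+k contain a zero factor. *)
Lemma dd_weights_kill_products (x e : nat -> R) (k j : nat) :
  (1 <= k)%nat -> (1 <= j)%nat -> supported e (S k) -> moments_vanish e x (S k) k ->
  sumR (fun i => e i * prodR (fun m => x i - x (S j + m)%nat) (k - 1)) (S j) = 0.
Proof.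
  intros Hk Hj Hsupp Hm.
  rewrite <- (sumR_extend _ (S j) (j + k)); [| lia |].
  - rewrite (sumR_supported e _ (S k)) by (auto; lia).
    apply moments_prod. replace (S (k - 1)) with k by lia. exact Hm.
  - intros i Hi. rewrite (prodR_eq0 _ _ (i - S j)); [ring | lia |].
    replace (S j + (i - S j))%nat with i by lia. ring.
Qed.

Definition positivity_conditions (k n : nat) (x w : nat -> R) : Prop :=
  forall j : nat, (1 <= j <= n - k)%nat ->
    sumR (fun i => w i * prodR (fun m => x i - x (j + m)%nat) (k - 1)) j >= 0.

(* The case j = 1 of the positivity conditions: the first weight is nonnegative. *)
Lemma first_weight_nonneg (k n : nat) (x w : nat -> R) :
  (k < n)%nat -> descending x n -> positivity_conditions k n x w -> 0 <= w 1%nat.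
Proof.
  intros Hkn Hdec Hpos. specialize (Hpos 1%nat ltac:(lia)). simpl in Hpos.
  assert (0 < prodR (fun m => x 1%nat - x (S m)) (k - 1)).
  { apply prodR_pos. intros m Hm. assert (x (S m) < x 1%nat) by (apply Hdec; lia). lra. }
  nra.
Qed.

(* Removing w_1 times the weights e (with e_1 = 1) leaves weights on the nodes 2..n. *)
Definition peel (w e : nat -> R) : nat -> R := fun i => w (S i) - w 1%nat * e (S i).

Lemma sumR_peel (w e F : nat -> R) (n : nat) : e 1%nat = 1 ->
  sumR (fun i => w i * F i) (S n) =
  sumR (fun i => peel w e i * F (S i)) n + w 1%nat * sumR (fun i => e i * F i) (S n).
Proof.
  intros He1. rewrite <- sumR_scal.
  rewrite (sumR_ext (fun i => w i * F i)
             (fun i => (w i - w 1%nat * e i) * F i + w 1%nat * (e i * F i))) by (intros; ring).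
  rewrite sumR_add, (sumR_shift (fun i => (w i - w 1%nat * e i) * F i)), He1. unfold peel. ring.
Qed.

Lemma peel_admissible (k n : nat) (x w e : nat -> R) :
  (1 <= k)%nat -> (k <= n)%nat ->
  e 1%nat = 1 -> supported e (S k) -> moments_vanish e x (S k) k ->
  moments_vanish w x (S n) k -> positivity_conditions k (S n) x w ->
  moments_vanish (peel w e) (fun i => x (S i)) n k /\
  positivity_conditions k n (fun i => x (S i)) (peel w e).
Proof.
  intros Hk Hkn He1 Hsupp Hem Hm Hpos. split.
  - intros j Hj. pose proof (sumR_peel w e (fun i => x i ^ j) n He1) as E. cbv beta in E.
    rewrite Hm, (sumR_supported e _ (S k)), Hem in E by (auto; lia). lra.
  - intros j Hj.
    change (sumR (fun i => peel w e i * prodR (fun m => x (S i) - x (S j + m)%nat) (k - 1)) j >= 0).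
    pose proof (sumR_peel w e (fun i => prodR (fun m => x i - x (S j + m)%nat) (k - 1)) j He1) as E. cbv beta in E.
    rewrite (dd_weights_kill_products x e k j) in E by (auto; lia).
    assert (HS : (1 <= S j <= S n - k)%nat) by lia.
    pose proof (Hpos (S j) HS). lra.
Qed.

(** * Derivatives within an interval *)

Lemma deriv_within_const (p q C x : R) : deriv_within p q (fun _ => C) x 0.
Proof.
  intros eps He. exists 1. split; [lra|]. intros y _ Hne _.
  replace ((C - C) / (y - x) - 0) with 0 by (field; lra). rewrite Rabs_R0. lra.
Qed.

Lemma deriv_within_plus (p q : R) (g h : R -> R) (x l1 l2 : R) :
  deriv_within p q g x l1 -> deriv_within p q h x l2 ->
  deriv_within p q (fun y => g y + h y) x (l1 + l2).
Proof.
  intros H1 H2 eps He.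
  destruct (H1 (eps / 2)) as [d1 [Hd1 P1]]; [lra|].
  destruct (H2 (eps / 2)) as [d2 [Hd2 P2]]; [lra|].
  exists (Rmin d1 d2). split; [apply Rmin_pos; auto|]. intros y Hy Hne Hlt.
  specialize (P1 y Hy Hne (Rlt_le_trans _ _ _ Hlt (Rmin_l _ _))).
  specialize (P2 y Hy Hne (Rlt_le_trans _ _ _ Hlt (Rmin_r _ _))).
  replace ((g y + h y - (g x + h x)) / (y - x) - (l1 + l2)) with
    (((g y - g x) / (y - x) - l1) + ((h y - h x) / (y - x) - l2)) by (field; lra).
  eapply Rle_lt_trans; [apply Rabs_triang | lra].
Qed.

Lemma deriv_within_scal (p q c : R) (g : R -> R) (x l : R) :
  deriv_within p q g x l -> deriv_within p q (fun y => c * g y) x (c * l).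
Proof.
  intros H eps He. assert (Hc : 0 < Rabs c + 1) by (pose proof (Rabs_pos c); lra).
  destruct (H (eps / (Rabs c + 1))) as [d [Hd P]]; [apply Rdiv_lt_0_compat; lra|].
  exists d. split; [exact Hd|]. intros y Hy Hne Hlt. specialize (P y Hy Hne Hlt).
  replace ((c * g y - c * g x) / (y - x) - c * l) with (c * ((g y - g x) / (y - x) - l))
    by (field; lra).
  rewrite Rabs_mult. pose proof (Rabs_pos c). pose proof (Rabs_pos ((g y - g x) / (y - x) - l)).
  apply Rle_lt_trans with ((Rabs c + 1) * Rabs ((g y - g x) / (y - x) - l)); [nra|].
  replace eps with ((Rabs c + 1) * (eps / (Rabs c + 1))) by (field; lra).
  apply Rmult_lt_compat_l; lra.
Qed.

Lemma deriv_within_sum (p q x : R) (n : nat) (F : nat -> R -> R) (F' : nat -> R) :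
  (forall i, (1 <= i <= n)%nat -> deriv_within p q (F i) x (F' i)) ->
  deriv_within p q (fun y => sumR (fun i => F i y) n) x (sumR F' n).
Proof.
  induction n as [|n IH]; intros H; [exact (deriv_within_const p q 0 x)|].
  apply (deriv_within_plus p q _ (F (S n))); [apply IH; intros|]; apply H; lia.
Qed.

Lemma deriv_within_affine_comp (p q a b : R) (g : R -> R) (c0 d t l : R) :
  (forall s, p <= s <= q -> a <= c0 + s * d <= b) -> p <= t <= q ->
  deriv_within a b g (c0 + t * d) l ->
  deriv_within p q (fun s => g (c0 + s * d)) t (d * l).
Proof.
  intros Hin Ht H eps He. destruct (Req_dec d 0) as [->|Hd0].
  { exists 1. split; [lra|]. intros y _ Hne _. rewrite !Rmult_0_r.
    replace ((g (c0 + 0) - g (c0 + 0)) / (y - t) - 0 * l) with 0 by (field; lra).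
    rewrite Rabs_R0; lra. }
  assert (Hda : 0 < Rabs d) by (apply Rabs_pos_lt; auto).
  destruct (H (eps / Rabs d)) as [d1 [Hd1 P]]; [apply Rdiv_lt_0_compat; lra|].
  exists (d1 / Rabs d). split; [apply Rdiv_lt_0_compat; lra|]. intros y Hy Hne Hlt.
  assert (Hne' : c0 + y * d <> c0 + t * d).
  { intros E. apply Hne, (Rmult_eq_reg_r d); [lra | exact Hd0]. }
  assert (Hclose : Rabs (c0 + y * d - (c0 + t * d)) < d1).
  { replace (c0 + y * d - (c0 + t * d)) with (d * (y - t)) by ring. rewrite Rabs_mult.
    replace d1 with (Rabs d * (d1 / Rabs d)) by (field; lra).
    apply Rmult_lt_compat_l; auto. }
  specialize (P _ (Hin y Hy) Hne' Hclose).
  replace (c0 + y * d - (c0 + t * d)) with (d * (y - t)) in P by ring.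
  replace ((g (c0 + y * d) - g (c0 + t * d)) / (y - t) - d * l) with
    (d * ((g (c0 + y * d) - g (c0 + t * d)) / (d * (y - t)) - l)) by (field; split; lra).
  rewrite Rabs_mult. replace eps with (Rabs d * (eps / Rabs d)) by (field; lra).
  apply Rmult_lt_compat_l; auto.
Qed.

Lemma deriv_within_continuous (p q : R) (g : R -> R) (x l : R) :
  deriv_within p q g x l -> forall eps, 0 < eps ->
  exists delta, 0 < delta /\
    forall y, p <= y <= q -> Rabs (y - x) < delta -> Rabs (g y - g x) < eps.
Proof.
  intros H eps He. destruct (H 1) as [d1 [Hd1 P]]; [lra|].
  assert (Hl : 0 < Rabs l + 1) by (pose proof (Rabs_pos l); lra).
  exists (Rmin d1 (eps / (Rabs l + 1))).
  split; [apply Rmin_pos; [auto | apply Rdiv_lt_0_compat; lra]|]. intros y Hy Hlt.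
  destruct (Req_dec y x) as [->|Hne].
  { replace (g x - g x) with 0 by ring. rewrite Rabs_R0; lra. }
  specialize (P y Hy Hne (Rlt_le_trans _ _ _ Hlt (Rmin_l _ _))).
  assert (Hlt2 : Rabs (y - x) < eps / (Rabs l + 1))
    by (eapply Rlt_le_trans; [exact Hlt | apply Rmin_r]).
  set (Q := (g y - g x) / (y - x)) in *.
  replace (g y - g x) with (Q * (y - x)) by (unfold Q; field; lra). rewrite Rabs_mult.
  assert (HQ : Rabs Q < Rabs l + 1).
  { replace Q with ((Q - l) + l) by ring. eapply Rle_lt_trans; [apply Rabs_triang | lra]. }
  assert (0 < Rabs (y - x)) by (apply Rabs_pos_lt; lra).
  apply Rlt_trans with ((Rabs l + 1) * Rabs (y - x)); [apply Rmult_lt_compat_r; auto|].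
  replace eps with ((Rabs l + 1) * (eps / (Rabs l + 1))) by (field; lra).
  apply Rmult_lt_compat_l; auto.
Qed.

(* Projection of R onto [p,q]; it lets a function known only on [p,q] be extended to a
   continuous function on R, as the mean value theorem requires. *)
Definition clamp (p q y : R) : R := Rmax p (Rmin q y).

Lemma clamp_in (p q y : R) : p <= q -> p <= clamp p q y <= q.
Proof. intros. unfold clamp, Rmax, Rmin. repeat destruct Rle_dec; lra. Qed.

Lemma clamp_id (p q y : R) : p <= y <= q -> clamp p q y = y.
Proof. intros. unfold clamp, Rmax, Rmin. repeat destruct Rle_dec; lra. Qed.

Lemma clamp_lipschitz (p q y z : R) : p <= q -> Rabs (clamp p q y - clamp p q z) <= Rabs (y - z).
Proof. intros. unfold clamp, Rmax, Rmin, Rabs. repeat destruct Rle_dec; repeat destruct Rcase_abs; lra. Qed.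

Lemma nondecreasing_of_deriv_nonneg (p q : R) (g g' : R -> R) :
  p < q -> (forall t, p <= t <= q -> deriv_within p q g t (g' t)) ->
  (forall t, p < t < q -> 0 <= g' t) -> g p <= g q.
Proof.
  intros Hpq Hd Hpos. set (h := fun y => g (clamp p q y)).
  destruct (MVT_gen h p q (fun t => Rmax 0 (g' t))) as [c [Hc E]].
  - rewrite Rmin_left, Rmax_right by lra. intros x Hx. apply is_derive_Reals.
    rewrite Rmax_right by (apply Hpos; auto).
    intros eps He. destruct (Hd x ltac:(lra) eps He) as [d [Hd0 P]].
    assert (Hm : 0 < Rmin d (Rmin (x - p) (q - x))) by (repeat apply Rmin_pos; lra).
    exists (mkposreal _ Hm). intros hh Hne Hlt. simpl in Hlt.
    pose proof (Rmin_l d (Rmin (x - p) (q - x))). pose proof (Rmin_r d (Rmin (x - p) (q - x))).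
    pose proof (Rmin_l (x - p) (q - x)). pose proof (Rmin_r (x - p) (q - x)).
    assert (Hin : p <= x + hh <= q) by (revert Hlt; unfold Rabs; destruct Rcase_abs; lra).
    unfold h. rewrite !clamp_id by lra.
    specialize (P (x + hh) Hin). replace (x + hh - x) with hh in P by ring. apply P; lra.
  - intros x _ eps He.
    destruct (deriv_within_continuous _ _ _ _ _ (Hd _ (clamp_in p q x ltac:(lra))) eps He)
      as [d [Hd0 P]].
    exists d. split; [exact Hd0|]. intros y [_ Hy]. simpl in *. unfold R_dist in *.
    apply P; [apply clamp_in; lra | eapply Rle_lt_trans; [apply clamp_lipschitz; lra | exact Hy]].
  - unfold h in E. rewrite !clamp_id in E by lra.
    assert (0 <= Rmax 0 (g' c)) by apply Rmax_l. nra.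
Qed.

(** * Divided differences of functions with nonnegative k-th derivative *)

Section DividedDifferences.

Variables a b : R.

(* If e are divided-difference weights with e_1 >= 0 on nodes in [a,b], then
   sum_i e_i f(x_i) >= 0 whenever f^(k) >= 0.  For k+1 > 1 nodes, scale the nodes
   towards the smallest one c0: phi(t) = sum_i e_i f(c0 + t (x_i - c0)) satisfies
   phi(0) = 0 (zeroth moment) and phi(1) = the sum; phi'(t) is the sum for f' with
   weights e_i (x_i - c0) on the k scaled nodes other than c0, nonnegative by induction. *)
Lemma divided_difference_nonneg (k : nat) : forall (D : nat -> R -> R) (x e : nat -> R),
  kth_derivs_on a b k D -> (forall y, a <= y <= b -> D k y >= 0) ->
  descending x (S k) -> nodes_in a b x (S k) -> moments_vanish e x (S k) k -> 0 <= e 1%nat ->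
  sumR (fun i => e i * D 0%nat (x i)) (S k) >= 0.
Proof.
  induction k as [|k IH]; intros D x e hD hDk Hdec Hin Hm He1.
  { simpl. assert (D 0%nat (x 1%nat) >= 0) by (apply hDk, Hin; lia). nra. }
  set (N := S (S k)). set (c0 := x N).
  assert (Hc0 : a <= c0 <= b) by (apply Hin; unfold N; lia).
  set (phi := fun t => sumR (fun i => e i * D 0%nat (c0 + t * (x i - c0))) N).
  set (phi' := fun t => sumR (fun i => e i * ((x i - c0) * D 1%nat (c0 + t * (x i - c0)))) N).
  assert (Hderiv : forall t, 0 <= t <= 1 -> deriv_within 0 1 phi t (phi' t)).
  { intros t Ht. apply deriv_within_sum. intros i Hi. apply deriv_within_scal.
    pose proof (Hin i Hi).
    apply (deriv_within_affine_comp 0 1 a b); [intros s Hs; nra | exact Ht|].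
    apply hD; [lia | nra]. }
  assert (Hphi'_nonneg : forall t, 0 < t < 1 -> 0 <= phi' t).
  { intros t Ht. set (y := fun i => c0 + t * (x i - c0)). set (e' := fun i => e i * (x i - c0)).
    (* the weight of e' at the node c0 is zero, so e' lives on the first k+1 nodes *)
    assert (Hdrop : forall F, sumR (fun i => e' i * F i) N = sumR (fun i => e' i * F i) (S k)).
    { intros F. apply sumR_extend; [unfold N; lia|]. intros i Hi.
      replace i with N by (unfold N; lia). unfold e', c0. rewrite Rminus_diag. ring. }
    assert (Hmom' : moments_vanish e' y (S k) k).
    { intros j Hj. rewrite <- Hdrop.
      rewrite <- (moments_affine e' x N k (c0 - t * c0) t (moments_mul_linear e x N k c0 Hm) j Hj).
      apply sumR_ext. intros. unfold y. do 2 f_equal. ring. }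
    replace (phi' t) with (sumR (fun i => e' i * D 1%nat (y i)) (S k))
      by (rewrite <- Hdrop; apply sumR_ext; intros; unfold e', y; ring).
    apply Rge_le, (IH (fun j => D (S j)) y e').
    - intros j Hj z Hz. apply hD; [lia | exact Hz].
    - exact hDk.
    - intros i j Hi Hij Hj. unfold y. assert (x j < x i) by (apply Hdec; lia). nra.
    - intros i Hi. unfold y. pose proof (Hin i ltac:(lia)). nra.
    - exact Hmom'.
    - unfold e'. assert (x N < x 1%nat) by (apply Hdec; unfold N; lia). unfold c0. nra. }
  assert (H01 : phi 0 <= phi 1) by (apply (nondecreasing_of_deriv_nonneg 0 1 phi phi'); auto; lra).
  assert (E1 : phi 1 = sumR (fun i => e i * D 0%nat (x i)) N)
    by (apply sumR_ext; intros; do 3 f_equal; ring).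
  assert (E0 : phi 0 = 0).
  { unfold phi. rewrite (sumR_ext _ (fun i => D 0%nat c0 * (e i * x i ^ 0)))
      by (intros; simpl; replace (c0 + 0 * (x i - c0)) with c0 by ring; ring).
    rewrite sumR_scal, Hm by lia. ring. }
  lra.
Qed.

Lemma weighted_sum_nonneg (k : nat) (D : nat -> R -> R) :
  (1 <= k)%nat -> kth_derivs_on a b k D -> (forall y, a <= y <= b -> D k y >= 0) ->
  forall (n : nat) (x w : nat -> R),
  descending x n -> nodes_in a b x n -> moments_vanish w x n k -> positivity_conditions k n x w ->
  sumR (fun i => w i * D 0%nat (x i)) n >= 0.
Proof.
  intros Hk hD hDk n. induction n as [|n IH]; intros x w Hdec Hin Hm Hpos; [simpl; lra|].
  destruct (Nat.le_gt_cases (S n) k) as [Hsmall|Hbig].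
  { rewrite sumR_zero; [lra|]. intros i Hi.
    rewrite (moments_full_zero x (S n) w Hdec (fun j Hj => Hm j ltac:(lia))) by lia. ring. }
  destruct (dd_weights_exist k x) as (e & He1 & Hsupp & Hem); [intros ? ? ? ? ?; apply Hdec; lia|].
  destruct (peel_admissible k n x w e) as [Hm' Hpos']; try assumption; [lia|].
  assert (Hw1 : 0 <= w 1%nat) by exact (first_weight_nonneg k (S n) x w Hbig Hdec Hpos).
  assert (Hrest : sumR (fun i => peel w e i * D 0%nat (x (S i))) n >= 0).
  { apply IH; try assumption; [intros ? ? ? ? ?; apply Hdec | intros ? ?; apply Hin]; lia. }
  assert (Hdd : sumR (fun i => e i * D 0%nat (x i)) (S k) >= 0).
  { apply divided_difference_nonneg; try assumption;
      [intros ? ? ? ? ?; apply Hdec; lia | intros ? ?; apply Hin; lia | rewrite He1; lra]. }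
  rewrite (sumR_peel w e _ n He1), (sumR_supported e _ (S k)) by (auto; lia). nra.
Qed.

End DividedDifferences.

Theorem mainTheorem10
  (k n : nat) (a b : R) (pts w : nat -> R)
  (hk : (1 <= k)%nat)
  (hdec : forall i : nat, (1 <= i < n)%nat -> pts (S i) < pts i)
  (hab : forall i : nat, (1 <= i <= n)%nat -> a <= pts i <= b)
  (hmom : forall j : nat, (j < k)%nat -> sumR (fun i => w i * pts i ^ j) n = 0)
  (hpos : forall j : nat, (1 <= j <= n - k)%nat ->
     sumR (fun i => w i * prodR (fun m => pts i - pts (j + m)%nat) (k - 1)) j >= 0)
  (f : R -> R) (D : nat -> R -> R)
  (hD0 : forall x : R, a <= x <= b -> D O x = f x)
  (hD : kth_derivs_on a b k D)
  (hDk : forall x : R, a <= x <= b -> D k x >= 0) :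
  sumR (fun i => w i * f (pts i)) n >= 0.
Proof.
  rewrite (sumR_ext _ (fun i => w i * D 0%nat (pts i)))
    by (intros i Hi; rewrite hD0 by (apply hab; exact Hi); reflexivity).
  exact (weighted_sum_nonneg a b k D hk hD hDk n pts w (descending_of_succ pts n hdec) hab hmom hpos).
Qed.
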